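(* Let $a\neq 0$ be a constant and let $\phi(x,t)$ be a smooth function with $\phi_x\neq0$ satisfying the Schwarz–KdV equation $\frac{\phi_t}{\phi_x}+a\{\phi;x\}=0$. Then $u=a\{\phi;x\}$ solves the KdV equation $u_t+au_{xxx}+3uu_x=0$, and for any constants $A,B$ not both zero, on a region where $A\phi+B\neq0$, the function $$\widetilde u=a\{\phi;x\}+4a\Big(\log\frac{A\phi+B}{\sqrt{\phi_x}}\Big)_{xx}$$ also solves the KdV equation $\widetilde u_t+a\widetilde u_{xxx}+3\widetilde u\widetilde u_x=0$.
   Context: The Schwarzian derivative of a function $\phi(x,t)$ with $\phi_x\neq0$ is $\{\phi;x\}=\frac{\phi_{xxx}}{\phi_x}-\frac32\frac{\phi_{xx}^2}{\phi_x^2}$. All functions are smooth. *)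

From Stdlib Require Import Reals.
From Coquelicot Require Import Coquelicot.
Open Scope R_scope.

Definition dx (f : R -> R -> R) : R -> R -> R :=
  fun x t => Derive (fun y => f y t) x.
Definition dt (f : R -> R -> R) : R -> R -> R :=
  fun x t => Derive (fun s => f x s) t.

Fixpoint Ck (n : nat) (f : R -> R -> R) : Prop :=
  match n with
  | O => forall x t, continuous (fun p : R * R => f (fst p) (snd p)) (x, t)
  | S n' =>
      (forall x t, continuous (fun p : R * R => f (fst p) (snd p)) (x, t)) /\
      (forall x t, ex_derive (fun y => f y t) x /\ ex_derive (fun s => f x s) t) /\
      Ck n' (dx f) /\ Ck n' (dt f)
  end.

Definition smooth2 (f : R -> R -> R) : Prop := forall n, Ck n f.

Definition schwarzian (phi : R -> R -> R) : R -> R -> R :=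
  fun x t => dx (dx (dx phi)) x t / dx phi x t
             - 3 / 2 * (dx (dx phi) x t / dx phi x t) ^ 2.

Definition open2 (U : R -> R -> Prop) : Prop :=
  forall x t, U x t -> exists eps : R, 0 < eps /\
    forall y s, Rabs (y - x) < eps -> Rabs (s - t) < eps -> U y s.

Definition KdV_at (a : R) (u : R -> R -> R) (x t : R) : Prop :=
  dt u x t + a * dx (dx (dx u)) x t + 3 * u x t * dx u x t = 0.

(* log((A phi + B)/sqrt(phi_x)), taken with absolute values so it is defined
   for either sign of A phi + B and of phi_x; its x-derivatives coincide with
   those of any local branch of the logarithm. *)
Definition logterm (A B : R) (phi : R -> R -> R) : R -> R -> R :=
  fun x t => ln (Rabs (A * phi x t + B)) - / 2 * ln (Rabs (dx phi x t)).

Definition utilde (a A B : R) (phi : R -> R -> R) : R -> R -> R :=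
  fun x t => a * schwarzian phi x t + 4 * a * dx (dx (logterm A B phi)) x t.

(* Write Y_n = phi^(n) / phi_x (phi^(n) the n-th x-derivative) and
   Z = A phi_x / (A phi + B).  Every function in the statement, together with
   all its x- and t-derivatives, is a polynomial in the Y_n and Z, because
     (Y_n)_x = Y_(n+1) - Y_n Y_2,          Z_x = Z Y_2 - Z^2,
   and the Schwarz-KdV equation gives phi^(n)_t = phi_x Q_n, where
     Q_0 = -a {phi; x},   Q_(n+1) = Y_2 Q_n + (Q_n)_x,
   whence (Y_n)_t = Q_n - Y_n Q_1 and Z_t = Z Q_1 - Z^2 Q_0.  We encode such
   polynomials syntactically, derive them formally, and the two KdV equations
   become rational identities in finitely many Y_n and Z, checked by [field]. *)

From Stdlib Require Import Reals Lra.
From Coquelicot Require Import Coquelicot.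
Open Scope R_scope.

Lemma is_derive_eq (f : R -> R) (x l l' : R) :
  is_derive f x l -> l = l' -> is_derive f x l'.
Proof. intros H ->; exact H. Qed.

Lemma is_derive_Rconst (c x : R) : is_derive (fun _ => c) x 0.
Proof. exact (is_derive_const c x). Qed.

Lemma is_derive_Rplus (f g : R -> R) (x df dg : R) :
  is_derive f x df -> is_derive g x dg ->
  is_derive (fun y => f y + g y) x (df + dg).
Proof. intros; apply (is_derive_plus f g); auto. Qed.

Lemma is_derive_Rmult (f g : R -> R) (x df dg : R) :
  is_derive f x df -> is_derive g x dg ->
  is_derive (fun y => f y * g y) x (df * g x + f x * dg).
Proof. intros; apply (is_derive_mult f g); auto; intros; apply Rmult_comm. Qed.

Lemma is_derive_ln_abs (g : R -> R) (x dg : R) :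
  is_derive g x dg -> g x <> 0 ->
  is_derive (fun y => ln (Rabs (g y))) x (dg / g x).
Proof.
  intros Hg Hn. eapply is_derive_eq.
  - apply (is_derive_comp ln (fun y => Rabs (g y))).
    + apply is_derive_ln, Rabs_pos_lt, Hn.
    + apply is_derive_Rabs; [exact Hg | exact Hn].
  - unfold scal; simpl; unfold mult; simpl.
    destruct (Rlt_dec (g x) 0) as [Hneg | Hnneg].
    + rewrite sign_eq_m1, Rabs_left by exact Hneg. field. exact Hn.
    + assert (Hpos : 0 < g x) by (destruct (Rtotal_order (g x) 0) as [?|[?|?]]; tauto || lra).
      rewrite sign_eq_1, Rabs_right by lra. field. exact Hn.
Qed.

Lemma smooth2_dx (f : R -> R -> R) : smooth2 f -> smooth2 (dx f).
Proof. intros H n. exact (proj1 (proj2 (proj2 (H (S n))))). Qed.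

Lemma smooth2_dt (f : R -> R -> R) : smooth2 f -> smooth2 (dt f).
Proof. intros H n. exact (proj2 (proj2 (proj2 (H (S n))))). Qed.

Lemma smooth2_is_derive_x (f : R -> R -> R) (x t : R) :
  smooth2 f -> is_derive (fun y => f y t) x (dx f x t).
Proof. intros H. apply Derive_correct, (proj1 (proj2 (H 1%nat)) x t). Qed.

Lemma smooth2_is_derive_t (f : R -> R -> R) (x t : R) :
  smooth2 f -> is_derive (fun s => f x s) t (dt f x t).
Proof. intros H. apply Derive_correct, (proj1 (proj2 (H 1%nat)) x t). Qed.

Lemma smooth2_continuity_2d_pt (f : R -> R -> R) (x t : R) :
  smooth2 f -> continuity_2d_pt f x t.
Proof. intros H. apply continuity_2d_pt_filterlim, (H O x t). Qed.

Lemma dt_dx_comm (f : R -> R -> R) (x t : R) :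
  smooth2 f -> dt (dx f) x t = dx (dt f) x t.
Proof.
  intros H. symmetry. apply (Schwarz f x t).
  - exists (mkposreal 1 Rlt_0_1). intros u v _ _.
    destruct (proj1 (proj2 (H 1%nat)) u v) as [Hx Ht].
    repeat split; [exact Hx | exact Ht | |].
    + exact (proj1 (proj1 (proj2 (smooth2_dt f H 1%nat)) u v)).
    + exact (proj2 (proj1 (proj2 (smooth2_dx f H 1%nat)) u v)).
  - exact (smooth2_continuity_2d_pt _ x t (smooth2_dx _ (smooth2_dt f H))).
  - exact (smooth2_continuity_2d_pt _ x t (smooth2_dt _ (smooth2_dx f H))).
Qed.

Lemma open2_full : open2 (fun _ _ => True).
Proof. intros x t _. exists 1. split; [lra | auto]. Qed.

Lemma open2_locally_x (U : R -> R -> Prop) (x t : R) :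
  open2 U -> U x t -> locally x (fun y => U y t).
Proof.
  intros HO HU. destruct (HO x t HU) as [e [He HP]].
  exists (mkposreal e He). intros y Hy. apply HP; [exact Hy |].
  rewrite Rminus_eq_0, Rabs_R0. exact He.
Qed.

Lemma open2_locally_t (U : R -> R -> Prop) (x t : R) :
  open2 U -> U x t -> locally t (fun s => U x s).
Proof.
  intros HO HU. destruct (HO x t HU) as [e [He HP]].
  exists (mkposreal e He). intros s Hs. apply HP; [| exact Hs].
  rewrite Rminus_eq_0, Rabs_R0. exact He.
Qed.

Inductive dpoly :=
  | Yv (n : nat) | Zv | Cst (r : R) | Add (p q : dpoly) | Mul (p q : dpoly).

Fixpoint dpoly_eval (y : nat -> R) (z : R) (p : dpoly) : R :=
  match p with
  | Yv n => y n
  | Zv => z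
  | Cst r => r
  | Add p q => dpoly_eval y z p + dpoly_eval y z q
  | Mul p q => dpoly_eval y z p * dpoly_eval y z q
  end.

Fixpoint derivation (dy : nat -> dpoly) (dz : dpoly) (p : dpoly) : dpoly :=
  match p with
  | Yv n => dy n
  | Zv => dz
  | Cst _ => Cst 0
  | Add p q => Add (derivation dy dz p) (derivation dy dz q)
  | Mul p q => Add (Mul (derivation dy dz p) q) (Mul p (derivation dy dz q))
  end.

Fixpoint Zfree (p : dpoly) : Prop :=
  match p with
  | Zv => False
  | Add p q | Mul p q => Zfree p /\ Zfree q
  | _ => True
  end.

Lemma dpoly_eval_Zfree (y : nat -> R) (z z' : R) (p : dpoly) :
  Zfree p -> dpoly_eval y z p = dpoly_eval y z' p.
Proof. induction p; simpl; intuition congruence. Qed.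

Lemma derivation_Zfree (dy : nat -> dpoly) (dz p : dpoly) :
  (forall n, Zfree (dy n)) -> Zfree dz -> Zfree p -> Zfree (derivation dy dz p).
Proof. intros Hy Hz; induction p; simpl; intuition. Qed.

Definition dY_dx (n : nat) : dpoly := Add (Yv (S n)) (Mul (Cst (-1)) (Mul (Yv n) (Yv 2))).

Definition Dx (dz : dpoly) : dpoly -> dpoly := derivation dY_dx dz.

Definition schwarzian_poly : dpoly :=
  Add (Yv 3) (Mul (Cst (-3/2)) (Mul (Yv 2) (Yv 2))).

(* [flow_poly a n] is phi^(n)_t / phi_x along the Schwarz-KdV flow. *)
Fixpoint flow_poly (a : R) (n : nat) : dpoly :=
  match n with
  | O => Mul (Cst (-a)) schwarzian_poly
  | S k => Add (Mul (Yv 2) (flow_poly a k)) (Dx (Cst 0) (flow_poly a k))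
  end.

Lemma flow_poly_Zfree (a : R) (n : nat) : Zfree (flow_poly a n).
Proof.
  induction n as [| n IH]; simpl; [tauto |].
  split; [tauto |]. apply derivation_Zfree; simpl; auto.
Qed.

Definition dY_dt (a : R) (n : nat) : dpoly :=
  Add (flow_poly a n) (Mul (Cst (-1)) (Mul (Yv n) (flow_poly a 1))).

Definition Dt (a : R) (dz : dpoly) : dpoly -> dpoly := derivation (dY_dt a) dz.

Definition kdv_residual (a : R) (dzx dzt u : dpoly) (y : nat -> R) (z : R) : R :=
  dpoly_eval y z (Dt a dzt u)
  + a * dpoly_eval y z (Dx dzx (Dx dzx (Dx dzx u)))
  + 3 * dpoly_eval y z u * dpoly_eval y z (Dx dzx u).

Definition dZ_dx : dpoly := Add (Mul Zv (Yv 2)) (Mul (Cst (-1)) (Mul Zv Zv)).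

Definition dZ_dt (a : R) : dpoly :=
  Add (Mul Zv (flow_poly a 1)) (Mul (Cst (-1)) (Mul (Mul Zv Zv) (flow_poly a 0))).

Definition u_poly (a : R) : dpoly := Mul (Cst a) schwarzian_poly.

(* the x-derivative of [logterm A B phi] *)
Definition logterm_dx_poly : dpoly := Add Zv (Mul (Cst (-1/2)) (Yv 2)).

Definition utilde_poly (a : R) : dpoly :=
  Add (u_poly a) (Mul (Cst (4 * a)) (Dx dZ_dx logterm_dx_poly)).

Lemma kdv_residual_u (a : R) (y : nat -> R) (z : R) :
  kdv_residual a (Cst 0) (Cst 0) (u_poly a) y z = 0.
Proof. unfold kdv_residual; simpl; field. Qed.

Lemma kdv_residual_utilde (a : R) (y : nat -> R) (z : R) :
  kdv_residual a dZ_dx (dZ_dt a) (utilde_poly a) y z = 0.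
Proof. unfold kdv_residual; simpl; field. Qed.

Fixpoint dxn (phi : R -> R -> R) (n : nat) : R -> R -> R :=
  match n with O => phi | S k => dx (dxn phi k) end.

Lemma smooth2_dxn (phi : R -> R -> R) (n : nat) : smooth2 phi -> smooth2 (dxn phi n).
Proof. intros H; induction n; simpl; auto using smooth2_dx. Qed.

Section Evaluation.

Variable phi : R -> R -> R.
Hypothesis phi_smooth : smooth2 phi.
Hypothesis phi_x_neq0 : forall x t, dx phi x t <> 0.

Definition Yn (n : nat) (x t : R) : R := dxn phi n x t / dx phi x t.

Definition eval (zf : R -> R -> R) (p : dpoly) (x t : R) : R :=
  dpoly_eval (fun n => Yn n x t) (zf x t) p.

Lemma schwarzian_eval (zf : R -> R -> R) (x t : R) :
  schwarzian phi x t = eval zf schwarzian_poly x t.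
Proof. unfold eval, Yn, schwarzian; simpl. field. apply phi_x_neq0. Qed.

Lemma Yn_is_derive_x (n : nat) (x t : R) :
  is_derive (fun y => Yn n y t) x (eval (fun _ _ => 0) (dY_dx n) x t).
Proof.
  eapply is_derive_eq.
  - apply is_derive_div; [apply smooth2_is_derive_x, smooth2_dxn, phi_smooth
                         | apply smooth2_is_derive_x, smooth2_dx, phi_smooth
                         | apply phi_x_neq0].
  - unfold eval, Yn; simpl. field. apply phi_x_neq0.
Qed.

Section XDerivative.

Variables (U : R -> R -> Prop) (zf : R -> R -> R) (dz : dpoly).
Hypothesis U_open : open2 U.
Hypothesis zf_is_derive_x :
  forall x t, U x t -> is_derive (fun y => zf y t) x (eval zf dz x t).

Lemma eval_is_derive_x (p : dpoly) (x t : R) :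
  U x t -> is_derive (fun y => eval zf p y t) x (eval zf (Dx dz p) x t).
Proof.
  intros HU. induction p; unfold eval in *; simpl.
  - exact (Yn_is_derive_x n x t).
  - exact (zf_is_derive_x x t HU).
  - apply is_derive_Rconst.
  - apply is_derive_Rplus; assumption.
  - apply is_derive_Rmult; assumption.
Qed.

Lemma dx_eval (F : R -> R -> R) (p : dpoly) :
  (forall x t, U x t -> F x t = eval zf p x t) ->
  forall x t, U x t -> dx F x t = eval zf (Dx dz p) x t.
Proof.
  intros HF x t HU. unfold dx.
  rewrite (Derive_ext_loc _ (fun y => eval zf p y t)).
  - apply is_derive_unique, eval_is_derive_x, HU.
  - generalize (open2_locally_x U x t U_open HU). apply filter_imp. intros y. apply HF.
Qed.

End XDerivative.

Variable a : R.
Hypothesis schwarz_kdv : forall x t, dt phi x t / dx phi x t + a * schwarzian phi x t = 0.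

Lemma dt_dxn_Z0 (n : nat) (x t : R) :
  dt (dxn phi n) x t = dx phi x t * eval (fun _ _ => 0) (flow_poly a n) x t.
Proof.
  revert x t. induction n as [| n IH]; intros x t; cbn [dxn].
  - change (eval _ (flow_poly a 0) x t)
      with (- a * eval (fun _ _ => 0) schwarzian_poly x t).
    rewrite <- schwarzian_eval.
    replace (dt phi x t) with (dx phi x t * (dt phi x t / dx phi x t))
      by (field; apply phi_x_neq0).
    replace (dt phi x t / dx phi x t) with (- a * schwarzian phi x t)
      by (generalize (schwarz_kdv x t); lra).
    ring.
  - rewrite dt_dx_comm by (apply smooth2_dxn, phi_smooth).
    unfold dx at 1.
    rewrite (Derive_ext _ (fun y => dx phi y t * eval (fun _ _ => 0) (flow_poly a n) y t))
      by (intros; apply IH).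
    apply is_derive_unique. eapply is_derive_eq.
    + apply is_derive_Rmult; [apply smooth2_is_derive_x, smooth2_dx, phi_smooth |].
      apply (eval_is_derive_x (fun _ _ => True) _ (Cst 0)); [| exact I].
      intros; apply is_derive_Rconst.
    + unfold eval, Yn; simpl. field. apply phi_x_neq0.
Qed.

Lemma dt_dxn (zf : R -> R -> R) (n : nat) (x t : R) :
  dt (dxn phi n) x t = dx phi x t * eval zf (flow_poly a n) x t.
Proof.
  rewrite dt_dxn_Z0. unfold eval.
  rewrite (dpoly_eval_Zfree _ 0 (zf x t)) by apply flow_poly_Zfree. reflexivity.
Qed.

Lemma Yn_is_derive_t (zf : R -> R -> R) (n : nat) (x t : R) :
  is_derive (fun s => Yn n x s) t (eval zf (dY_dt a n) x t).
Proof.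
  eapply is_derive_eq.
  - apply is_derive_div; [apply smooth2_is_derive_t, smooth2_dxn, phi_smooth
                         | apply smooth2_is_derive_t, smooth2_dx, phi_smooth
                         | apply phi_x_neq0].
  - rewrite (dt_dxn zf n), (dt_dxn zf 1).
    unfold eval, Yn; simpl. field. apply phi_x_neq0.
Qed.

Section TDerivative.

Variables (U : R -> R -> Prop) (zf : R -> R -> R) (dz : dpoly).
Hypothesis U_open : open2 U.
Hypothesis zf_is_derive_t :
  forall x t, U x t -> is_derive (fun s => zf x s) t (eval zf dz x t).

Lemma eval_is_derive_t (p : dpoly) (x t : R) :
  U x t -> is_derive (fun s => eval zf p x s) t (eval zf (Dt a dz p) x t).
Proof.
  intros HU. induction p; unfold eval in *; simpl.
  - exact (Yn_is_derive_t zf n x t).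
  - exact (zf_is_derive_t x t HU).
  - apply is_derive_Rconst.
  - apply is_derive_Rplus; assumption.
  - apply is_derive_Rmult; assumption.
Qed.

Lemma dt_eval (F : R -> R -> R) (p : dpoly) :
  (forall x t, U x t -> F x t = eval zf p x t) ->
  forall x t, U x t -> dt F x t = eval zf (Dt a dz p) x t.
Proof.
  intros HF x t HU. unfold dt.
  rewrite (Derive_ext_loc _ (fun s => eval zf p x s)).
  - apply is_derive_unique, eval_is_derive_t, HU.
  - generalize (open2_locally_t U x t U_open HU). apply filter_imp. intros s. apply HF.
Qed.

End TDerivative.

Lemma KdV_at_eval (U : R -> R -> Prop) (zf : R -> R -> R) (dzx dzt u : dpoly)
    (F : R -> R -> R) :
  open2 U ->
  (forall x t, U x t -> is_derive (fun y => zf y t) x (eval zf dzx x t)) ->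
  (forall x t, U x t -> is_derive (fun s => zf x s) t (eval zf dzt x t)) ->
  (forall y z, kdv_residual a dzx dzt u y z = 0) ->
  (forall x t, U x t -> F x t = eval zf u x t) ->
  forall x t, U x t -> KdV_at a F x t.
Proof.
  intros HO Hzx Hzt Hres HF x t HU.
  pose proof (dx_eval U zf dzx HO Hzx F u HF) as HF1.
  pose proof (dx_eval U zf dzx HO Hzx _ _ HF1) as HF2.
  pose proof (dx_eval U zf dzx HO Hzx _ _ HF2) as HF3.
  unfold KdV_at.
  rewrite (dt_eval U zf dzt HO Hzt F u HF x t HU), (HF3 x t HU), (HF1 x t HU), (HF x t HU).
  apply Hres.
Qed.

Lemma schwarzian_KdV (x t : R) : KdV_at a (fun y s => a * schwarzian phi y s) x t.
Proof.
  apply (KdV_at_eval (fun _ _ => True) (fun _ _ => 0) (Cst 0) (Cst 0) (u_poly a));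
    [apply open2_full | intros; apply is_derive_Rconst .. | apply kdv_residual_u | | exact I].
  intros y s _. rewrite (schwarzian_eval (fun _ _ => 0)). reflexivity.
Qed.

Section Utilde.

Variables (A B : R) (U : R -> R -> Prop).
Hypothesis U_open : open2 U.
Hypothesis denom_neq0 : forall x t, U x t -> A * phi x t + B <> 0.

Definition Zf (x t : R) : R := A * dx phi x t / (A * phi x t + B).

Lemma Zf_is_derive_x (x t : R) :
  U x t -> is_derive (fun y => Zf y t) x (eval Zf dZ_dx x t).
Proof.
  intros HU. eapply is_derive_eq.
  - apply is_derive_div; [| | exact (denom_neq0 x t HU)].
    + apply is_derive_Rmult; [apply is_derive_Rconst |].
      apply smooth2_is_derive_x, smooth2_dx, phi_smooth.
    + apply is_derive_Rplus; [| apply is_derive_Rconst].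
      apply is_derive_Rmult; [apply is_derive_Rconst |].
      apply smooth2_is_derive_x, phi_smooth.
  - unfold eval, Yn, Zf; simpl. field.
    split; auto.
Qed.

Lemma Zf_is_derive_t (x t : R) :
  U x t -> is_derive (fun s => Zf x s) t (eval Zf (dZ_dt a) x t).
Proof.
  intros HU. eapply is_derive_eq.
  - apply is_derive_div; [| | exact (denom_neq0 x t HU)].
    + apply is_derive_Rmult; [apply is_derive_Rconst |].
      apply smooth2_is_derive_t, smooth2_dx, phi_smooth.
    + apply is_derive_Rplus; [| apply is_derive_Rconst].
      apply is_derive_Rmult; [apply is_derive_Rconst |].
      apply smooth2_is_derive_t, phi_smooth.
  - change (dt (dx phi) x t) with (dt (dxn phi 1) x t).
    change (dt phi x t) with (dt (dxn phi 0) x t).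
    rewrite (dt_dxn Zf 1 x t), (dt_dxn Zf 0 x t).
    unfold eval, Yn, Zf; simpl. field.
    split; auto.
Qed.

Lemma dx_logterm_eval (x t : R) :
  U x t -> dx (logterm A B phi) x t = eval Zf logterm_dx_poly x t.
Proof.
  intros HU. unfold dx. apply is_derive_unique.
  apply (is_derive_ext (fun y => ln (Rabs (A * phi y t + B)) + - / 2 * ln (Rabs (dx phi y t)))).
  { intros y. unfold logterm. unfold Rminus. rewrite Ropp_mult_distr_l. reflexivity. }
  eapply is_derive_eq.
  - apply is_derive_Rplus.
    + apply is_derive_ln_abs; [| exact (denom_neq0 x t HU)].
      apply is_derive_Rplus; [| apply is_derive_Rconst].
      apply is_derive_Rmult; [apply is_derive_Rconst |].
      apply smooth2_is_derive_x, phi_smooth.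
    + apply is_derive_Rmult; [apply is_derive_Rconst |].
      apply is_derive_ln_abs; [| apply phi_x_neq0].
      apply smooth2_is_derive_x, smooth2_dx, phi_smooth.
  - unfold eval, Yn, Zf; simpl. field.
    split; auto.
Qed.

Lemma utilde_eval (x t : R) :
  U x t -> utilde a A B phi x t = eval Zf (utilde_poly a) x t.
Proof.
  intros HU. unfold utilde.
  rewrite (dx_eval U Zf dZ_dx U_open Zf_is_derive_x _ _ dx_logterm_eval x t HU).
  rewrite (schwarzian_eval Zf). reflexivity.
Qed.

Lemma utilde_KdV (x t : R) : U x t -> KdV_at a (utilde a A B phi) x t.
Proof.
  apply (KdV_at_eval U Zf dZ_dx (dZ_dt a) (utilde_poly a)); auto using
    Zf_is_derive_x, Zf_is_derive_t, kdv_residual_utilde, utilde_eval.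
Qed.

End Utilde.
End Evaluation.

Theorem mainTheorem8 (a : R) (phi : R -> R -> R) (A B : R) (U : R -> R -> Prop) :
  a <> 0 ->
  smooth2 phi ->
  (forall x t, dx phi x t <> 0) ->
  (forall x t, dt phi x t / dx phi x t + a * schwarzian phi x t = 0) ->
  (A <> 0 \/ B <> 0) ->
  open2 U ->
  (forall x t, U x t -> A * phi x t + B <> 0) ->
  (forall x t, KdV_at a (fun y s => a * schwarzian phi y s) x t) /\
  (forall x t, U x t -> KdV_at a (utilde a A B phi) x t).
Proof.
  intros _ Hs Hd Hk _ HO HU. split.
  - exact (schwarzian_KdV phi Hs Hd a Hk).
  - exact (utilde_KdV phi Hs Hd a Hk A B U HO HU).
Qed.
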